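(* Let $V(K)\times\bm W(K)$ admit an $M$-decomposition with associated spaces $\widetilde V(K)=\nabla\times\bm W(K)$ and $\widetilde{\bm W}_c(K)=\nabla\times V(K)\oplus\bm W_0(K)$. Then $\dim\gamma\widetilde V^\perp(K)=\dim\widetilde V^\perp(K)$ and $\dim\gamma\widetilde{\bm W}_c^\perp(K)=\dim\widetilde{\bm W}_c^\perp(K)$, where $\gamma\widetilde V^\perp(K):=\{\bm n\times v|_{\partial K}:v\in\widetilde V^\perp(K)\}$ and $\gamma\widetilde{\bm W}_c^\perp(K):=\{\bm n\times\bm w\times\bm n|_{\partial K}:\bm w\in\widetilde{\bm W}_c^\perp(K)\}$.
   Context: $K\subset\mathbb R^2$ is a polygonal element with unit outward normal $\bm n$; $V(K)\subset H^1(K)$, $\bm W(K)\subset\bm H(\mathrm{curl};K)$ are finite-dimensional (complex) polynomial spaces and $\bm M(\partial K)$ a finite-dimensional space of vector functions on $\partial K$. Conventions: $\nabla\times\bm v=-\partial_yv_1+\partial_xv_2$, $\nabla\times p=(\partial_yp,-\partial_xp)^T$, $\bm n\times\bm v=-n_2v_1+n_1v_2$, $\bm n\times p=(n_2p,-n_1p)^T$, $\bm n\times\bm w\times\bm n:=\bm w-(\bm w\cdot\bm n)\bm n$. $\mathrm{tr}(v,\bm w):=(\bm n\times v+\bm n\times\bm w\times\bm n)|_{\partial K}$. $\bm W_0(K):=\{\bm w\in\bm W(K):\nabla\times\bm w=0 \text{ in } K,\ \bm n\times\bm w\times\bm n=\bm0\text{ on }\partial K\}$. $\perp$ denotes $L^2(K)$-orthogonal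 complement in $V(K)$ resp. $\bm W(K)$. $V(K)\times\bm W(K)$ admits an $M$-decomposition with associated spaces $\widetilde V(K)\subset V(K)$, $\widetilde{\bm W}(K)\subset\bm W(K)$ if: $\bm n\times V(K)\subset\bm M(\partial K)$, $\bm n\times\bm W(K)\times\bm n\subset\bm M(\partial K)$; $\nabla\times V(K)\subset\widetilde{\bm W}(K)$, $\nabla\times\bm W(K)\subset\widetilde V(K)$; $\mathrm{tr}:\widetilde V^\perp(K)\times\widetilde{\bm W}^\perp(K)\to\bm M(\partial K)$ is an isomorphism; and $\bm n\times\bm\mu=0$ implies $\bm\mu=\bm0$ for $\bm\mu\in\bm M(\partial K)$. *)

From HB Require Import structures.
From mathcomp Require Import all_boot all_order all_algebra.
From mathcomp Require Import mpoly.
From mathcomp Require Import all_classical all_reals all_analysis.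
From mathcomp Require Import complex.

Set Implicit Arguments.
Unset Strict Implicit.
Unset Printing Implicit Defensive.

Import Order.TTheory GRing.Theory Num.Theory.
Import numFieldNormedType.Exports.
Local Open Scope classical_set_scope.
Local Open Scope ring_scope.

Section LinAlg.
Variables (F : fieldType) (E : lmodType F).

Definition subspace (S : set E) : Prop :=
  S 0 /\ forall (a : F) (x y : E), S x -> S y -> S (a *: x + y).

Definition has_dim (S : set E) (d : nat) : Prop :=
  exists b : 'I_d -> E,
    [/\ forall i, S (b i),
        forall c : 'I_d -> F, \sum_(i < d) c i *: b i = 0 -> forall i, c i = 0
      & forall x, S x -> exists c : 'I_d -> F, x = \sum_(i < d) c i *: b i].

Definition findim_subspace (S : set E) : Prop :=
  subspace S /\ exists d, has_dim S d.

End LinAlg.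

Section Geometry.
Variable R : realType.

Definition cseg (a b : R * R) : set (R * R) :=
  [set x | exists t : R, 0 <= t <= 1 /\
      x = (a.1 + t * (b.1 - a.1), a.2 + t * (b.2 - a.2))].
Definition oseg (a b : R * R) : set (R * R) :=
  [set x | exists t : R, 0 < t < 1 /\
      x = (a.1 + t * (b.1 - a.1), a.2 + t * (b.2 - a.2))].

(* K is the (open) interior of the simple closed polygon with vertices
   vx 0, vx 1, ..., vx (m-1) (edges [vx i, vx (i+1 mod m)]). *)
Definition polygonal_element (K : set (R * R)) (m : nat)
    (vx : 'I_m -> R * R) : Prop :=
  [/\ (3 <= m)%N /\ injective vx,
      open K /\ connected K,
      (exists r : R, forall x, K x -> `|x.1| <= r /\ `|x.2| <= r),
      closure K `\` K = [set x | exists i : 'I_m, cseg (vx i) (vx (ordS i)) x]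
    & forall i j : 'I_m, i <> j ->
        cseg (vx i) (vx (ordS i)) `&` cseg (vx j) (vx (ordS j)) `<=`
        [set x | (x = vx j /\ j = ordS i) \/ (x = vx i /\ i = ordS j)]].

(* the boundary dK without the vertices (union of the open edges);
   the outward normal is defined there *)
Definition bdry (m : nat) (vx : 'I_m -> R * R) : set (R * R) :=
  [set x | exists i : 'I_m, oseg (vx i) (vx (ordS i)) x].

Definition outward_normal (K : set (R * R)) (m : nat) (vx : 'I_m -> R * R)
    (nrm : R * R -> R * R) : Prop :=
  forall (i : 'I_m) x, oseg (vx i) (vx (ordS i)) x ->
    [/\ (nrm x).1 ^+ 2 + (nrm x).2 ^+ 2 = 1,
        (nrm x).1 * ((vx (ordS i)).1 - (vx i).1)
          + (nrm x).2 * ((vx (ordS i)).2 - (vx i).2) = 0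
      & exists2 eps : R, 0 < eps & forall t : R, 0 < t < eps ->
          ~ K (x.1 + t * (nrm x).1, x.2 + t * (nrm x).2) /\
          K (x.1 - t * (nrm x).1, x.2 - t * (nrm x).2)].

End Geometry.

Section Fields.
Variable R : realType.

Local Notation C := (R[i]).
(* scalar complex polynomials in the two variables x (index 0), y (index 1) *)
Definition spoly := {mpoly C[2]}.
Definition vpoly := (spoly * spoly)%type.

Definition ix : 'I_2 := ord0.
Definition iy : 'I_2 := ord_max.

Definition cR (r : R) : C := Complex r 0.

Definition ev (p : spoly) (x : R * R) : C :=
  p.@[fun i : 'I_2 => if i == ix then cR x.1 else cR x.2].

Definition dx (p : spoly) : spoly := mderiv ix p.
Definition dy (p : spoly) : spoly := mderiv iy p.

Definition curlv (w : vpoly) : spoly := - dy w.1 + dx w.2.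
Definition curls (p : spoly) : vpoly := (dy p, - dx p).

Definition bfun (m : nat) (vx : 'I_m -> R * R) :=
  {x : R * R | bdry vx x} -> (C * C)%type.

Variables (m : nat) (vx : 'I_m -> R * R) (nrm : R * R -> R * R).

(* n x p = (n2 p, - n1 p) restricted to dK *)
Definition gam (p : spoly) : bfun vx :=
  fun x => (cR (nrm (sval x)).2 * ev p (sval x),
            - (cR (nrm (sval x)).1 * ev p (sval x))).

(* n x w x n = w - (w . n) n restricted to dK *)
Definition tang (w : vpoly) : bfun vx :=
  fun x => let n1 := cR (nrm (sval x)).1 in let n2 := cR (nrm (sval x)).2 in
    let wn := ev w.1 (sval x) * n1 + ev w.2 (sval x) * n2 in
    (ev w.1 (sval x) - wn * n1, ev w.2 (sval x) - wn * n2).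

Definition trc (p : spoly) (w : vpoly) : bfun vx := gam p + tang w.

Definition ncross (mu : bfun vx) (x : {x : R * R | bdry vx x}) : C :=
  - (cR (nrm (sval x)).2 * (mu x).1) + cR (nrm (sval x)).1 * (mu x).2.

Variable K : set (R * R).

Definition leb2 := ((@lebesgue_measure R) \x (@lebesgue_measure R))%E.

(* (f, 1)_{L^2(K)} = 0 for a complex-valued f, i.e. real and imaginary
   parts of the integral over K vanish *)
Definition int0 (f : R * R -> C) : Prop :=
  (\int[leb2]_(x in K) (complex.Re (f x))%:E = 0)%E /\
  (\int[leb2]_(x in K) (complex.Im (f x))%:E = 0)%E.

Definition orth_s (u v : spoly) : Prop :=
  int0 (fun x => ev u x * (ev v x)^*).
Definition orth_v (u v : vpoly) : Prop :=
  int0 (fun x => ev u.1 x * (ev v.1 x)^* + ev u.2 x * (ev v.2 x)^*).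

Definition sperp (S St : set spoly) : set spoly :=
  [set u | S u /\ forall t, St t -> orth_s u t].
Definition vperp (S St : set vpoly) : set vpoly :=
  [set u | S u /\ forall t, St t -> orth_v u t].

Definition W0 (W : set vpoly) : set vpoly :=
  [set w | W w /\ (forall x, K x -> ev (curlv w) x = 0) /\ tang w = 0].

Definition M_decomposition (V : set spoly) (W : set vpoly) (M : set (bfun vx))
    (Vt : set spoly) (Wt : set vpoly) : Prop :=
  [/\
      (subspace Vt /\ Vt `<=` V) /\ (subspace Wt /\ Wt `<=` W),
      (forall p, V p -> M (gam p)) /\ (forall w, W w -> M (tang w)),
      (forall p, V p -> Wt (curls p)) /\ (forall w, W w -> Vt (curlv w)),
      (* tr : Vt^perp x Wt^perp -> M is an isomorphism (it is linear) *)
      [/\ forall p w, sperp V Vt p -> vperp W Wt w -> M (trc p w),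
          forall p1 w1 p2 w2, sperp V Vt p1 -> vperp W Wt w1 ->
            sperp V Vt p2 -> vperp W Wt w2 ->
            trc p1 w1 = trc p2 w2 -> p1 = p2 /\ w1 = w2
        & forall mu, M mu ->
            exists p w, [/\ sperp V Vt p, vperp W Wt w & trc p w = mu]]
    &
      forall mu, M mu -> ncross mu = (fun=> 0) -> mu = 0].

Definition Vtilde (W : set vpoly) : set spoly := [set curlv w | w in W].
Definition Wtilde_c (V : set spoly) (W : set vpoly) : set vpoly :=
  [set curls p + w0 | p in V & w0 in W0 W].

End Fields.

Arguments gam {R m} vx nrm p.
Arguments tang {R m} vx nrm w.
Arguments trc {R m} vx nrm p w.
Arguments ncross {R m} vx nrm mu x.
Arguments M_decomposition {R m} vx nrm K V W M Vt Wt.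

From Pilot Require Import Defs.
From HB Require Import structures.
From mathcomp Require Import all_boot all_order all_algebra.
From mathcomp Require Import mpoly.
From mathcomp Require Import all_classical all_reals all_analysis.
From mathcomp Require Import complex.
From mathcomp Require Import ring lra.
Import Order.TTheory GRing.Theory Num.Theory.
Import numFieldNormedType.Exports.
Set Implicit Arguments.
Unset Strict Implicit.
Unset Printing Implicit Defensive.
Local Open Scope classical_set_scope.
Local Open Scope ring_scope.

(* Because tr(v, 0) = n x v and tr(0, w) = n x w x n, injectivity of tr on
   Vt^perp x Wt_c^perp makes v |-> n x v and w |-> n x w x n injective linear
   maps on Vt^perp and Wt_c^perp, and injective linear maps preserve dimension.
   The analytic input is that these L^2(K)-orthogonal complements are
   subspaces: K is open and bounded, hence measurable with finite measure, and
   products of polynomials are bounded and measurable on K, so the integrals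
   defining orthogonality are linear. *)

Section InjectiveImage.
Variables (F : fieldType) (E1 E2 : lmodType F) (f : {linear E1 -> E2}) (S : set E1).
(* [subspace] alone would denote the subspace topology of mathcomp-analysis. *)
Hypothesis S_subspace : Defs.subspace S.
Hypothesis f_inj : forall x y, S x -> S y -> f x = f y -> x = y.

Lemma subspace_lincomb d (c : 'I_d -> F) (b : 'I_d -> E1) :
  (forall i, S (b i)) -> S (\sum_(i < d) c i *: b i).
Proof.
move=> Sb; have [S0 Scl] : Defs.subspace S := S_subspace.
by elim/big_rec: _ => [|i y _ Sy] //; apply: Scl.
Qed.

Lemma has_dim_injective_image d : has_dim [set f x | x in S] d <-> has_dim S d.
Proof.
split.
- case=> e [Se e_free e_span].
  have /choice [s s_pre] : forall i, exists x, S x /\ f x = e i.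
    by move=> i; case: (Se i) => x Sx <-; exists x.
  have f_comb c : f (\sum_(i < d) c i *: s i) = \sum_(i < d) c i *: e i.
    by rewrite linear_sum; apply: eq_bigr => i _; rewrite linearZ (s_pre i).2.
  have Ss i : S (s i) by case: (s_pre i).
  exists s; split => //.
  + by move=> c c0; apply: e_free; rewrite -f_comb c0 linear0.
  + move=> x Sx; have [|c fx] := e_span (f x); first by exists x.
    by exists c; apply: f_inj => //; [exact: subspace_lincomb | rewrite f_comb].
- case=> b [Sb b_free b_span]; exists (f \o b); split.
  + by move=> i; exists (b i).
  + move=> c c0; apply: b_free; apply: f_inj.
    * exact: subspace_lincomb.
    * exact: (proj1 S_subspace).
    * by rewrite linear_sum linear0 -[RHS]c0; apply: eq_bigr => i _; rewrite linearZ.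
  + move=> _ [x Sx <-]; case: (b_span x Sx) => c ->; exists c.
    by rewrite linear_sum; apply: eq_bigr => i _; rewrite linearZ.
Qed.
End InjectiveImage.

Section Traces.
Variables (R : realType) (m : nat) (vx : 'I_m -> R * R) (nrm : R * R -> R * R).

Lemma gam_is_linear : linear (gam vx nrm).
Proof.
move=> a p q; apply: funext => x; rewrite /gam /ev !mevalD !mevalZ.
by apply: injective_projections => /=; rewrite -[a *: _]/(a * _); ring.
Qed.
HB.instance Definition _ := GRing.isLinear.Build _ _ _ _ (gam vx nrm) gam_is_linear.

Lemma tang_is_linear : linear (tang vx nrm).
Proof.
move=> a [p1 p2] [q1 q2]; apply: funext => x.
rewrite /tang /ev /= !mevalD !mevalZ.
by apply: injective_projections => /=; rewrite -[a *: _]/(a * _); ring.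
Qed.
HB.instance Definition _ := GRing.isLinear.Build _ _ _ _ (tang vx nrm) tang_is_linear.

Lemma trc_gam p : trc vx nrm p 0 = gam vx nrm p.
Proof. by rewrite /trc linear0 addr0. Qed.

Lemma trc_tang w : trc vx nrm 0 w = tang vx nrm w.
Proof. by rewrite /trc linear0 add0r. Qed.
End Traces.

Section PlaneMeasure.
Variable R : realType.

Definition rat_box (q : rat * rat * rat) : set (R * R) :=
  [set` `]ratr q.1.1 - ratr q.2, ratr q.1.1 + ratr q.2[%R] `*`
  [set` `]ratr q.1.2 - ratr q.2, ratr q.1.2 + ratr q.2[%R].

Lemma rat_box_measurable q : measurable (rat_box q).
Proof. by apply: measurableX; exact: measurable_itv. Qed.

Lemma open_rat_box_cover (K : set (R * R)) x : open K -> K x ->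
  exists q, rat_box q x /\ rat_box q `<=` K.
Proof.
move=> oK Kx; have : nbhs x K by apply: open_nbhs_nbhs.
case/nbhs_ballP => e e0 xeK.
(* A box of half-width in (e/3, 2e/3) centred within e/3 of x contains x and
   lies in the e-ball around x. *)
have e3 : 0 < e / 3 by apply: divr_gt0.
have [q1] : exists q : rat, ratr q \in `](x.1 - e/3), (x.1 + e/3)[ .
  by apply: rat_in_itvoo; lra.
have [q2] : exists q : rat, ratr q \in `](x.2 - e/3), (x.2 + e/3)[ .
  by apply: rat_in_itvoo; lra.
have [s] : exists q : rat, ratr q \in `](e/3), (2 * e/3)[ .
  by apply: rat_in_itvoo; lra.
rewrite !in_itv /= => /andP[a3 b3] /andP[a2 b2] /andP[a1 b1].
exists (q1, q2, s); split.
  by rewrite /rat_box /= !in_itv /=; split; apply/andP; split; lra.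
move=> y [/=]; rewrite !in_itv /= => /andP[c1 d1] /andP[c2 d2].
apply: xeK; split => /=; rewrite -ball_normE /= ltr_distlC; apply/andP; split; lra.
Qed.

Lemma open_measurableR2 (K : set (R * R)) : open K -> measurable K.
Proof.
move=> oK.
have -> : K = \bigcup_q [set x | rat_box q x /\ rat_box q `<=` K].
  apply/seteqP; split; last by move=> x [q _ [qx qK]]; exact: qK.
  by move=> x /(open_rat_box_cover oK) [q qxK]; exists q.
apply: countable_bigcupT_measurable; first exact: countableP.
move=> q; have [qK|qK] := pselect (rat_box q `<=` K).
  rewrite (_ : [set x | _] = rat_box q); first exact: rat_box_measurable.
  by apply/seteqP; split => x /=; [case|move=> qx; split].
by rewrite (_ : [set x | _] = set0) //; apply/seteqP; split => x // [].
Qed.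

Lemma bounded_measure_lty (K : set (R * R)) (r : R) : measurable K ->
  (forall x, K x -> `|x.1| <= r /\ `|x.2| <= r) -> (@leb2 R K < +oo)%E.
Proof.
move=> mK Kr.
have I_lty : (@lebesgue_measure R [set` `[-r, r]%R] < +oo)%E.
  by rewrite lebesgue_measure_itv /=; case: ifP => _; rewrite -?EFinB ?ltry.
apply: (@le_lt_trans _ _ (@leb2 R ([set` `[-r, r]] `*` [set` `[-r, r]]))).
  apply: le_measure; rewrite ?inE //; first by apply: measurableX; exact: measurable_itv.
  by move=> x /Kr [x1 x2]; split => /=; rewrite in_itv /= -ler_norml.
rewrite /leb2 product_measure1E; [|exact: measurable_itv..].
by apply: lte_mul_pinfty => //; rewrite ge0_fin_numE.
Qed.

End PlaneMeasure.

Section BoundedMeasurable.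
Variables (R : realType) (K : set (R * R)) (r : R).
Hypothesis K_bounded : forall x, K x -> `|x.1| <= r /\ `|x.2| <= r.
Local Notation C := (R[i]).

Definition bounded_mfun (f : R * R -> R) :=
  measurable_fun K f /\ exists B, forall x, K x -> `|f x| <= B.
Definition bounded_cmfun (g : R * R -> C) :=
  bounded_mfun (fun x => complex.Re (g x)) /\
  bounded_mfun (fun x => complex.Im (g x)).

Lemma bounded_mfun_cst c : bounded_mfun (fun=> c).
Proof. by split; [exact: measurable_cst | exists `|c|]. Qed.

Lemma bounded_mfun_fst : bounded_mfun fst.
Proof.
split; first by apply: measurable_funTS; exact: measurable_fst.
by exists r => x /K_bounded [].
Qed.

Lemma bounded_mfun_snd : bounded_mfun snd.
Proof.
split; first by apply: measurable_funTS; exact: measurable_snd.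
by exists r => x /K_bounded [].
Qed.

Lemma bounded_mfunD f g :
  bounded_mfun f -> bounded_mfun g -> bounded_mfun (fun x => f x + g x).
Proof.
move=> [mf [Bf fB]] [mg [Bg gB]].
split; first exact: measurable_realfun.measurable_funD.
exists (Bf + Bg) => x Kx; apply: le_trans (ler_normD _ _) _.
by apply: lerD; [exact: fB | exact: gB].
Qed.

Lemma bounded_mfunN f : bounded_mfun f -> bounded_mfun (fun x => - f x).
Proof.
move=> [mf [B fB]]; split; first exact: measurable_realfun.measurable_funN.
by exists B => x Kx; rewrite normrN; exact: fB.
Qed.

Lemma bounded_mfunM f g :
  bounded_mfun f -> bounded_mfun g -> bounded_mfun (fun x => f x * g x).
Proof.
move=> [mf [Bf fB]] [mg [Bg gB]].
split; first exact: measurable_realfun.measurable_funM.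
exists (Bf * Bg) => x Kx; rewrite normrM.
by apply: ler_pM => //; [exact: fB | exact: gB].
Qed.

Lemma bounded_cmfun_cst c : bounded_cmfun (fun=> c).
Proof. by split; exact: bounded_mfun_cst. Qed.

Lemma bounded_cmfun_real f : bounded_mfun f -> bounded_cmfun (fun x => cR (f x)).
Proof. by move=> bf; split; last exact: bounded_mfun_cst. Qed.

Lemma bounded_cmfunD f g :
  bounded_cmfun f -> bounded_cmfun g -> bounded_cmfun (fun x => f x + g x).
Proof.
move=> [f1 f2] [g1 g2]; split.
  have := bounded_mfunD f1 g1.
  by congr bounded_mfun; apply: funext => x; case: (f x); case: (g x).
have := bounded_mfunD f2 g2.
by congr bounded_mfun; apply: funext => x; case: (f x); case: (g x).
Qed.

Lemma bounded_cmfunM f g :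
  bounded_cmfun f -> bounded_cmfun g -> bounded_cmfun (fun x => f x * g x).
Proof.
move=> [f1 f2] [g1 g2]; split.
  have := bounded_mfunD (bounded_mfunM f1 g1) (bounded_mfunN (bounded_mfunM f2 g2)).
  by congr bounded_mfun; apply: funext => x; case: (f x) => a b; case: (g x).
have := bounded_mfunD (bounded_mfunM f1 g2) (bounded_mfunM f2 g1).
by congr bounded_mfun; apply: funext => x; case: (f x) => a b; case: (g x).
Qed.

Lemma bounded_cmfunX f n : bounded_cmfun f -> bounded_cmfun (fun x => f x ^+ n).
Proof.
move=> bf; elim: n => [|n IH]; first exact: bounded_cmfun_cst.
have := bounded_cmfunM bf IH.
by congr bounded_cmfun; apply: funext => x; rewrite exprS.
Qed.

Lemma bounded_cmfun_conj f : bounded_cmfun f -> bounded_cmfun (fun x => (f x)^*%C).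
Proof.
move=> [f1 f2]; split.
  by have := f1; congr bounded_mfun; apply: funext => x; case: (f x).
by have := bounded_mfunN f2; congr bounded_mfun; apply: funext => x; case: (f x).
Qed.

Lemma bounded_cmfun_ev (p : spoly R) : bounded_cmfun (ev p).
Proof.
elim/mpolyind: p => [|c mu p _ _ IH].
  have := bounded_cmfun_cst 0.
  by congr bounded_cmfun; apply: funext => x; rewrite /ev meval0.
have -> : ev (c *: 'X_[mu] + p) =
    (fun x => c * ((cR x.1) ^+ mu ix * (cR x.2) ^+ mu iy) + ev p x).
  apply: funext => x; rewrite /ev mevalD mevalZ mevalX big_ord_recl big_ord1.
  by rewrite (_ : lift ord0 ord0 = iy) //; exact: val_inj.
apply: bounded_cmfunD IH; apply: bounded_cmfunM; first exact: bounded_cmfun_cst.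
by apply: bounded_cmfunM; apply: bounded_cmfunX; apply: bounded_cmfun_real;
  [exact: bounded_mfun_fst | exact: bounded_mfun_snd].
Qed.

Lemma bounded_cmfun_dot (p q : spoly R) :
  bounded_cmfun (fun x => ev p x * (ev q x)^*%C).
Proof.
exact: bounded_cmfunM (bounded_cmfun_ev p) (bounded_cmfun_conj (bounded_cmfun_ev q)).
Qed.

End BoundedMeasurable.

Section Orthogonality.
Variables (R : realType) (K : set (R * R)) (r : R).
Hypothesis K_bounded : forall x, K x -> `|x.1| <= r /\ `|x.2| <= r.
Hypothesis K_measurable : measurable K.
Local Notation C := (R[i]).
Local Notation "\int_K f" := (\int[@leb2 R]_(x in K) (f x)%:E)%E (at level 10, f at level 8).

Lemma bounded_mfun_integrable f :
  bounded_mfun K f -> (@leb2 R).-integrable K (EFin \o f).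
Proof.
move=> [mf [B fB]]; apply: measurable_bounded_integrable => //.
  exact: bounded_measure_lty K_bounded.
exists B; split; first exact: num_real.
by move=> B' BB' x Kx; apply: le_trans (fB x Kx) (ltW BB').
Qed.

Lemma integral_comb_eq0 (a b : R) f g h :
  bounded_mfun K f -> bounded_mfun K g -> bounded_mfun K h ->
  \int_K f = 0%E -> \int_K g = 0%E -> \int_K h = 0%E ->
  \int_K (fun x => a * f x + b * g x + h x) = 0%E.
Proof.
move=> /bounded_mfun_integrable If /bounded_mfun_integrable Ig
  /bounded_mfun_integrable Ih f0 g0 h0.
under eq_integral do rewrite !EFinD !EFinM.
rewrite integralD //; last by apply: integrableD => //; exact: integrableZl.
rewrite integralD //; [|exact: integrableZl..].
by rewrite !integralZl // f0 g0 h0 !mule0 !adde0.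
Qed.

(* Re and Im of [a * f + g] are real combinations of those of [f] and [g]. *)
Lemma int0_comb (a : C) f g : bounded_cmfun K f -> bounded_cmfun K g ->
  int0 K f -> int0 K g -> int0 K (fun x => a * f x + g x).
Proof.
move=> [f1 f2] [g1 g2] [If1 If2] [Ig1 Ig2]; case: a => a1 a2; split.
- transitivity (\int_K (fun x =>
    a1 * complex.Re (f x) + - a2 * complex.Im (f x) + complex.Re (g x))).
    apply: eq_integral => x _; congr (_%:E).
    by case: (f x) => ? ?; case: (g x) => ? ? /=; ring.
  exact: integral_comb_eq0.
- transitivity (\int_K (fun x =>
    a1 * complex.Im (f x) + a2 * complex.Re (f x) + complex.Im (g x))).
    apply: eq_integral => x _; congr (_%:E).
    by case: (f x) => ? ?; case: (g x) => ? ? /=; ring.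
  exact: integral_comb_eq0.
Qed.

Lemma int0_fun0 f : (forall x, f x = 0) -> int0 K f.
Proof.
move=> f0; split; rewrite -[RHS](integral0 (@leb2 R) K);
  by apply: eq_integral => x _; rewrite f0.
Qed.

Lemma sperp_subspace (V St : set (spoly R)) :
  Defs.subspace V -> Defs.subspace (sperp K V St).
Proof.
move=> [V0 Vcl]; split.
  by split=> // t _; apply: int0_fun0 => x; rewrite /ev meval0 mul0r.
move=> a p q [Vp pSt] [Vq qSt]; split=> [|t St_t]; first exact: Vcl.
have dot u : bounded_cmfun K (fun x => ev u x * (ev t x)^*%C).
  exact: bounded_cmfun_dot K_bounded _ _.
have := int0_comb a (dot p) (dot q) (pSt t St_t) (qSt t St_t).
by congr int0; apply: funext => x; rewrite /ev mevalD mevalZ; ring.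
Qed.

Lemma vperp_subspace (W St : set (vpoly R)) :
  Defs.subspace W -> Defs.subspace (vperp K W St).
Proof.
move=> [W0 Wcl]; split.
  split=> // t _; apply: int0_fun0 => x.
  (* The two zeros come from different instances of [R[i]]; [done] stalls on them. *)
  by rewrite /ev meval0 !mul0r; exact: addr0.
move=> a p q [Wp pSt] [Wq qSt]; split=> [|t St_t]; first exact: Wcl.
have dot u : bounded_cmfun K
    (fun x => ev u.1 x * (ev t.1 x)^*%C + ev u.2 x * (ev t.2 x)^*%C).
  by apply: bounded_cmfunD; exact: bounded_cmfun_dot K_bounded _ _.
have := int0_comb a (dot p) (dot q) (pSt t St_t) (qSt t St_t).
(* [mevalZ] stalls on [(a *: p).1]: split the pairs first. *)
case: p q {Wp pSt Wq qSt dot} => [p1 p2] [q1 q2]; rewrite /orth_v /=.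
by congr int0; apply: funext => x; rewrite /ev !mevalD !mevalZ; ring.
Qed.

End Orthogonality.

Theorem lemma3p9 (R : realType) (K : set (R * R)) (m : nat)
    (vx : 'I_m -> R * R) (nrm : R * R -> R * R)
    (V : set (spoly R)) (W : set (vpoly R)) (M : set (bfun vx)) :
  polygonal_element K vx ->
  outward_normal K vx nrm ->
  findim_subspace V -> findim_subspace W -> findim_subspace M ->
  M_decomposition vx nrm K V W M (Vtilde W) (Wtilde_c vx nrm K V W) ->
  (forall d : nat,
     has_dim [set gam vx nrm p | p in sperp K V (Vtilde W)] d <->
     has_dim (sperp K V (Vtilde W)) d) /\
  (forall d : nat,
     has_dim [set tang vx nrm w | w in vperp K W (Wtilde_c vx nrm K V W)] d <->
     has_dim (vperp K W (Wtilde_c vx nrm K V W)) d).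
Proof.
move=> [_ [K_open _] [r K_bounded] _ _] _ [V_sub _] [W_sub _] _
  [_ _ _ [_ trc_inj _] _].
have K_meas := open_measurableR2 K_open.
have Vperp := sperp_subspace K_bounded K_meas (Vtilde W) V_sub.
have Wperp := vperp_subspace K_bounded K_meas (Wtilde_c vx nrm K V W) W_sub.
have [[Vperp0 _] [Wperp0 _]] := (Vperp, Wperp).
split=> d; apply: has_dim_injective_image => //.
- move=> p1 p2 p1S p2S gam_eq.
  have := trc_inj _ _ _ _ p1S Wperp0 p2S Wperp0.
  by rewrite !trc_gam => /(_ gam_eq) [].
- move=> w1 w2 w1S w2S tang_eq.
  have := trc_inj _ _ _ _ Vperp0 w1S Vperp0 w2S.
  by rewrite !trc_tang => /(_ tang_eq) [].
Qed.
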